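(* Let $\mathcal{A} = (V, V_0, V_1, E, v_I)$ be an arena, $w \colon E \to -\mathbb{N} \cup \{\mathrm{R}\}$, $cap \in \mathbb{N}$ and $t \in \mathbb{N}$. If Player~$0$ wins $(\mathcal{A}, \mathsf{AvgRecharge}(w, cap, t))$, then she also wins it with a finite-state strategy implemented by a memory structure with $cap+2$ memory states.
   Context: An arena $\mathcal{A} = (V, V_0, V_1, E, v_I)$ consists of a finite directed graph $(V,E)$ in which every vertex has at least one outgoing edge, a partition $V = V_0 \uplus V_1$, and an initial vertex $v_I$. A play is an infinite path $v_0 v_1 \cdots$ with $v_0 = v_I$. A strategy for Player~$i$ is a map $\sigma \colon V^* V_i \to V$ with $(v, \sigma(xv)) \in E$; a play is consistent with $\sigma$ if $v_{n+1} = \sigma(v_0\cdots v_n)$ whenever $v_n \in V_i$. Player~$0$ wins $(\mathcal{A}, \mathrm{Win})$ (with a strategy $\sigma$) if all plays consistent with $\sigma$ lie in $\mathrm{Win}$. A memory structure $\mathcal{M} = (M, m_I, \mathrm{Upd})$ has a finite set $M$ of states, initial state $m_I$, and update $\mathrm{Upd} \colon M \times E \to M$, extended by $\mathrm{Upd}^+(v_0) = m_I$, $\mathrm{Upd}^+(v_0\cdots v_n v_{n+1}) = \mathrm{Upd}(\mathrm{Upd}^+(v_0\cdots v_n),(v_n,v_{n+1}))$. A next-move function $\mathrm{Nxt} \colon V_i \times M \to V$ with $(v,\mathrm{Nxt}(v,m)) \in E$ induces the strategy $\sigma(v_0\cdots v_n) = \mathrm{Nxt}(v_n, \mathrm{Upd}^+(v_0\cdots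 v_n))$; such a strategy is finite-state, implemented by $\mathcal{M}$, and its size is $|M|$. A recharge weight function $w \colon E \to -\mathbb{N} \cup \{\mathrm{R}\}$ labels each edge with a non-positive integer or the recharge action $\mathrm{R}$. For a finite path $x$ without $\mathrm{R}$-edges, $\mathrm{EL}(x)$ is the sum of its edge weights. $\mathrm{EL}_{cap}(v_0\cdots v_n) = cap + \mathrm{EL}(x)$ where $x$ is the longest suffix of $v_0\cdots v_n$ containing no $\mathrm{R}$-edge. $\mathsf{Recharge}(w,cap) = \{v_0 v_1 \cdots \mid \forall n.\ \mathrm{EL}_{cap}(v_0\cdots v_n) \ge 0\}$ and $\mathsf{AvgRecharge}(w,cap,t) = \{ v_0 v_1\cdots \mid \limsup_{n\to\infty} \frac1n \sum_{i=0}^{n-1}\mathrm{EL}_{cap}(v_0\cdots v_i) \le t\} \cap \mathsf{Recharge}(w,cap)$. *)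

From HB Require Import structures.
From mathcomp Require Import all_boot all_order all_algebra.
From mathcomp Require Import all_classical all_reals.
From mathcomp Require Import ereal sequences.
From mathcomp Require Import Rstruct.
From Stdlib Require Import Rdefinitions.

Set Implicit Arguments. Unset Strict Implicit. Unset Printing Implicit Defensive.
Import Order.TTheory GRing.Theory Num.Theory.

(** Arena: vertices [V : finType], edge relation [E], Player-0 vertices
    [V0] (Player-1 vertices are the complement), initial vertex [vI]. *)
Record arena := Arena {
  avert : finType;
  aedge : rel avert;
  aV0 : pred avert;
  ainit : avert;
  aedge_total : forall v : avert, exists v', aedge v v'
}.
Arguments aedge : clear implicits.
Arguments aV0 : clear implicits.
Arguments ainit : clear implicits.
Arguments avert : clear implicits.

Section Games.
Local Open Scope ring_scope.
Variable A : arena.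
Notation V := (avert A).
Notation E := (aedge A).

Definition is_play (p : nat -> V) : Prop :=
  p 0%N = ainit A /\ forall n, E (p n) (p n.+1).

(** Histories v_0 ... v_n as sequences; strategies of Player 0 are maps
    from histories to vertices (only values on histories ending in V0 matter). *)
Definition strategy := seq V -> V.

Definition is_strategy0 (sigma : strategy) : Prop :=
  forall (x : seq V) (v : V), aV0 A v -> E v (sigma (rcons x v)).

Definition prefix (p : nat -> V) (n : nat) : seq V := mkseq p n.+1.

Definition consistent0 (sigma : strategy) (p : nat -> V) : Prop :=
  forall n, aV0 A (p n) -> p n.+1 = sigma (prefix p n).

Definition wins0_with (Win : (nat -> V) -> Prop) (sigma : strategy) : Prop :=
  is_strategy0 sigma /\
  forall p, is_play p -> consistent0 sigma p -> Win p.

Definition wins0 (Win : (nat -> V) -> Prop) : Prop :=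
  exists sigma, wins0_with Win sigma.

Definition upd_plus (M : Type) (mI : M) (Upd : M -> V -> V -> M)
    (h : seq V) : M :=
  match h with
  | [::] => mI
  | v0 :: x => (foldl (fun (mu : M * V) v => (Upd mu.1 mu.2 v, v)) (mI, v0) x).1
  end.

Definition is_next_move (M : Type) (Nxt : V -> M -> V) : Prop :=
  forall v m, aV0 A v -> E v (Nxt v m).

Definition induced_strategy (M : Type) (mI : M) (Upd : M -> V -> V -> M)
    (Nxt : V -> M -> V) : strategy :=
  fun h => Nxt (last (ainit A) h) (upd_plus mI Upd h).

(** Recharge weights: [Wt k] stands for the weight -k, [Rch] for R. *)
Inductive rweight := Wt of nat | Rch.

Definition is_R (r : rweight) : bool := if r is Rch then true else false.
Definition wabs (r : rweight) : nat := if r is Wt k then k else 0%N.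

(** EL_cap(v_0 ... v_n): j is the start of the longest suffix without an
    R-edge (the position right after the last R-edge, or 0). *)
Definition last_recharge (w : V -> V -> rweight) (p : nat -> V) (n : nat) : nat :=
  \max_(i < n.+1 | (i == 0%N :> nat) || is_R (w (p i.-1) (p i))) i.

Definition ELcap (w : V -> V -> rweight) (cap : nat) (p : nat -> V) (n : nat) : int :=
  (Posz cap - Posz (\sum_(last_recharge w p n <= i < n) wabs (w (p i) (p i.+1)))).

Definition Recharge (w : V -> V -> rweight) (cap : nat) (p : nat -> V) : Prop :=
  forall n, (0 <= ELcap w cap p n).

Definition avg_EL (w : V -> V -> rweight) (cap : nat) (p : nat -> V) (n : nat) : R :=
  ((n%:R)^-1 * \sum_(i < n) (ELcap w cap p i)%:~R).

Definition AvgRecharge (w : V -> V -> rweight) (cap t : nat) (p : nat -> V) : Prop :=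
  (limn_esup (fun n => (avg_EL w cap p n)%:E) <= (t%:R : R)%:E)%E /\
  Recharge w cap p.

End Games.

From Pilot Require Import Defs.
From Stdlib Require Import Rdefinitions.
From mathcomp Require Import all_boot all_order all_algebra.
From mathcomp Require Import all_classical.
From mathcomp Require Import ereal sequences normedtype.
From mathcomp Require Import Rstruct.
From mathcomp Require Import ring lra zify.

Set Implicit Arguments. Unset Strict Implicit. Unset Printing Implicit Defensive.
Import Order.TTheory GRing.Theory Num.Theory.

(* Memory states [0..cap] record the current energy level EL_cap and the extra
   state [cap+1] records that it has become negative.  On the product arena
   V x M give state (v, m) the weight m - t, and weight 1 to the sink: a play
   belongs to AvgRecharge iff its lift avoids the sink and the limsup of its
   average weight is at most 0.  Such a threshold mean-payoff game is decided by
   its first-cycle game.  If Player 0 wins the first-cycle game, the partial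
   sums of weights stay bounded; the least such bound then is a potential, and
   moving to a successor that does not increase it gives a positional strategy
   on V x M, i.e. a strategy on V with memory M.  If she loses it, Player 1 can
   make every cycle closed on the stack of the play have positive weight, so
   the partial sums grow linearly against any strategy, and no strategy of
   Player 0 wins AvgRecharge. *)

Lemma mkseqSl (T : Type) (f : nat -> T) n :
  mkseq f n.+1 = f 0%N :: mkseq (fun i => f i.+1) n.
Proof. by elim: n => [//|n IH]; rewrite mkseqS IH mkseqS. Qed.

Section BoundedSumGames.
Local Open Scope ring_scope.
Variables (S : finType) (e : rel S) (own0 : pred S) (c : S -> int) (s0 : S).
Hypothesis e_total : forall x, exists y, e x y.

Definition strat := seq S -> S.

(* Player [true] is Player 0, the owner of the vertices in [own0]. *)
Definition legal (b : bool) (r : strat) :=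
  forall h x, own0 x = b -> e x (r (rcons h x)).

Definition play_from s (q : nat -> S) := q 0%N = s /\ forall n, e (q n) (q n.+1).

Definition hist (q : nat -> S) n := mkseq q n.+1.

Definition follows (b : bool) (r : strat) (q : nat -> S) :=
  forall n, own0 (q n) = b -> q n.+1 = r (hist q n).

Definition wsum (q : nat -> S) n : int := \sum_(i < n) c (q i).

Lemma wsumS q n : wsum q n.+1 = wsum q n + c (q n).
Proof. by rewrite /wsum big_ord_recr. Qed.

Lemma histS q n : hist q n.+1 = rcons (hist q n) (q n.+1).
Proof. by rewrite /hist mkseqS. Qed.

Lemma last_hist q n : last s0 (hist q n) = q n.
Proof. by rewrite /hist mkseqS last_rcons. Qed.

Definition some_succ x := odflt x [pick y | e x y].

Lemma some_succP x : e x (some_succ x).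
Proof.
rewrite /some_succ; case: pickP => //= none; exfalso.
by have [y] := e_total x; rewrite none.
Qed.

Section Outcome.
Variables (s : S) (r0 r1 : strat).

Fixpoint outcome_hist n : seq S :=
  if n is n.+1 then
    let h := outcome_hist n in rcons h (if own0 (last s h) then r0 h else r1 h)
  else [:: s].

Definition outcome n := last s (outcome_hist n).

Lemma outcome_histE n : outcome_hist n = hist outcome n.
Proof. by elim: n => [|n IH] //; rewrite histS -IH /outcome /= last_rcons. Qed.

Lemma outcomeS n : outcome n.+1 =
  if own0 (outcome n) then r0 (hist outcome n) else r1 (hist outcome n).
Proof. by rewrite {1}/outcome /= last_rcons -/(outcome n) outcome_histE. Qed.

Lemma outcome_play : legal true r0 -> legal false r1 -> play_from s outcome.
Proof.
move=> r0_legal r1_legal; split => // n; rewrite outcomeS /hist mkseqS.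
by case: ifP => own; [apply: r0_legal | apply: r1_legal].
Qed.

Lemma outcome_follows b : follows b (if b then r0 else r1) outcome.
Proof. by move=> n own; rewrite outcomeS own; case: b {own}. Qed.

End Outcome.

Definition positional (f : S -> S) : strat := fun h => f (last s0 h).

Lemma legal_positional b f : (forall x, own0 x = b -> e x (f x)) ->
  legal b (positional f).
Proof. by move=> f_legal h x own; rewrite /positional last_rcons; apply: f_legal. Qed.

Lemma exists_play s r : legal true r -> exists q, play_from s q /\ follows true r q.
Proof.
move=> r_legal; exists (outcome s r (positional some_succ)); split.
  by apply: outcome_play => //; apply: legal_positional => x _; apply: some_succP.
exact: (@outcome_follows _ _ _ true).
Qed.

(* Stacks of the first-cycle game: the history with every closed cycle cut out. *)
Definition push (st : seq S) y :=
  if y \in st then take (index y st).+1 st else rcons st y.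

Definition stack (h : seq S) := if h is x :: h' then foldl push [:: x] h' else [::].

Definition stack_weight st : int := \sum_(z <- st) c z.

Definition cycle_weight st y : int := stack_weight (drop (index y st) st).

(* [fcg k st]: Player 0 wins the first-cycle game from stack [st] within [k]
   moves, i.e. the first cycle closed has nonpositive weight.  Since stacks are
   duplicate-free, depth [#|S|.+1 - size st] always suffices. *)
Fixpoint fcg k st : bool :=
  if k is k.+1 then
    let x := last s0 st in
    let win_after y := if y \in st then cycle_weight st y <= 0
                       else fcg k (rcons st y) in
    if own0 x then [exists y, e x y && win_after y]
    else [forall y, e x y ==> win_after y]
  else false.

Definition cycle_win st := fcg (#|S|.+1 - size st) st.

Definition cycle_win_after st y :=
  if y \in st then cycle_weight st y <= 0 else cycle_win (rcons st y).

Lemma size_uniq_le_card (st : seq S) : uniq st -> (size st <= #|S|)%N.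
Proof. by move/card_uniqP <-; apply: max_card. Qed.

Lemma cycle_win_unfold st : (size st <= #|S|)%N -> cycle_win st =
  if own0 (last s0 st) then [exists y, e (last s0 st) y && cycle_win_after st y]
  else [forall y, e (last s0 st) y ==> cycle_win_after st y].
Proof.
move=> st_small; rewrite /cycle_win subSn //=; case: ifP => _;
  [apply: eq_existsb => y | apply: eq_forallb => y];
  by rewrite /cycle_win_after /cycle_win size_rcons subSS.
Qed.

Definition winning_stack b st := [/\ st != [::], uniq st &
  forall k, (0 < k <= size st)%N -> cycle_win (take k st) = b].

Lemma last_push st y : last s0 (push st y) = y.
Proof.
rewrite /push; case: ifP => y_st; last by rewrite last_rcons.
by rewrite (take_nth s0) ?index_mem // last_rcons nth_index.
Qed.

Lemma stack_rcons h y : h != [::] -> stack (rcons h y) = push (stack h) y.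
Proof. by case: h => // x h _ /=; rewrite foldl_rcons. Qed.

Lemma last_stack h x : last s0 (stack (rcons h x)) = x.
Proof. by case: h => [//|y h]; rewrite stack_rcons // last_push. Qed.

Lemma stack_histS q n : stack (hist q n.+1) = push (stack (hist q n)) (q n.+1).
Proof. by rewrite histS stack_rcons // /hist mkseqS; case: (mkseq q n). Qed.

Lemma winning_stack_push b st y :
  winning_stack b st -> cycle_win_after st y = b -> winning_stack b (push st y).
Proof.
case=> st_nil st_uniq st_win; rewrite /cycle_win_after /push; case: ifP => y_st win.
  have y_lt : (index y st < size st)%N by rewrite index_mem.
  split; [by rewrite -size_eq0 size_takel | exact: take_uniq |].
  move=> k /andP[k_gt0]; rewrite size_takel // => k_le.
  by rewrite take_takel // st_win // k_gt0 /= (leq_trans k_le).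
split; [by case: (st) | by rewrite rcons_uniq y_st st_uniq |].
move=> k /andP[k_gt0]; rewrite size_rcons leq_eqVlt => /orP[/eqP->|k_le].
  by rewrite -(size_rcons st y) take_size.
by rewrite -cats1 takel_cat // st_win // k_gt0.
Qed.

Lemma winning_stack_move b st : winning_stack b st ->
  (own0 (last s0 st) = b -> exists2 y, e (last s0 st) y & cycle_win_after st y = b) /\
  (own0 (last s0 st) != b -> forall y, e (last s0 st) y -> cycle_win_after st y = b).
Proof.
case=> st_nil st_uniq st_win.
have : cycle_win st = b.
  by rewrite -[st in cycle_win st]take_size st_win // lt0n size_eq0 st_nil /=.
rewrite cycle_win_unfold ?size_uniq_le_card //; clear st_win.
case: b; case: (own0 _) => /= win; split => //.
- by move=> _; case/existsP: win => y /andP[edge y_win]; exists y.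
- by move=> _ y edge; move/forallP: win => /(_ y); rewrite edge.
- move=> _ y edge; move/negbT: win; rewrite negb_exists => /forallP /(_ y).
  by rewrite edge /= => /negbTE.
- move=> _; move/negbT: win; rewrite negb_forall => /existsP [y].
  by rewrite negb_imply => /andP[edge y_win]; exists y => //; apply/negbTE.
Qed.

Lemma stack_weight_rcons st y : stack_weight (rcons st y) = stack_weight st + c y.
Proof. by rewrite /stack_weight -cats1 big_cat /= big_seq1. Qed.

Lemma stack_weight_push st y : y \in st ->
  stack_weight st + c y = stack_weight (push st y) + cycle_weight st y.
Proof.
move=> y_st; have y_lt : (index y st < size st)%N by rewrite index_mem.
rewrite /push y_st /cycle_weight /stack_weight.
rewrite (drop_nth s0 y_lt) nth_index // big_cons.
rewrite -{1}(cat_take_drop (index y st).+1 st) big_cat /=.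
by rewrite -addrA (addrC (c y)).
Qed.

Definition weight_bound : int := \sum_(z : S) `|c z|.

Lemma weight_bound_ge0 : 0 <= weight_bound.
Proof. by rewrite sumr_ge0. Qed.

Lemma stack_weight_bound st : uniq st -> `|stack_weight st| <= weight_bound.
Proof.
move=> st_uniq; apply: (le_trans (ler_norm_sum _ _ _)).
rewrite big_uniq // /weight_bound (bigID (mem st) predT) /=.
by rewrite lerDl sumr_ge0.
Qed.

Definition cycle_strat (b : bool) : strat := fun h =>
  let st := stack h in let x := last s0 st in
  odflt (some_succ x) [pick y | e x y && (cycle_win_after st y == b)].

Lemma cycle_strat_legal b b' : legal b' (cycle_strat b).
Proof.
move=> h x _; rewrite /cycle_strat last_stack.
by case: pickP => [y /andP[]//|_]; apply: some_succP.
Qed.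

Section CycleRun.
Variables (b : bool) (q : nat -> S).
Hypotheses (b_wins : cycle_win [:: s0] = b) (q_play : play_from s0 q)
  (q_follows : follows b (cycle_strat b) q).

Lemma cycle_run_invariant n :
  [/\ winning_stack b (stack (hist q n)), last s0 (stack (hist q n)) = q n
    & cycle_win_after (stack (hist q n)) (q n.+1) = b].
Proof.
have next m : winning_stack b (stack (hist q m)) ->
    last s0 (stack (hist q m)) = q m ->
    cycle_win_after (stack (hist q m)) (q m.+1) = b.
  move=> st_win st_last; have [own_move opp_move] := winning_stack_move st_win.
  case: (boolP (own0 (q m) == b)) => [/eqP own|own]; last first.
    by apply: opp_move; rewrite st_last //; case: q_play => _; apply.
  rewrite (q_follows own) /cycle_strat st_last.
  case: pickP => [y /andP[_ /eqP]//|none].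
  have [|y edge y_win] := own_move; first by rewrite st_last.
  by move: (none y); rewrite -st_last edge y_win eqxx.
elim: n => [|n [st_win st_last y_win]].
  have st_win : winning_stack b [:: q 0%N].
    by case: q_play => -> _; split => // -[|[|k]].
  by split => //; apply: next.
rewrite stack_histS; have st_win' := winning_stack_push st_win y_win.
split => //; first exact: last_push.
by rewrite -stack_histS; apply: next; rewrite stack_histS // last_push.
Qed.

End CycleRun.

Section CycleStrategies.
Variable q : nat -> S.
Hypothesis q_play : play_from s0 q.

Lemma wsum_le_stack_weight : cycle_win [:: s0] = true ->
  follows true (cycle_strat true) q ->
  forall n, wsum q n.+1 <= stack_weight (stack (hist q n)).
Proof.
move=> win q_follows; elim=> [|n IH].
  by rewrite wsumS /wsum big_ord0 add0r /stack_weight big_seq1.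
have [_ _] := cycle_run_invariant win q_play q_follows n.
rewrite wsumS stack_histS /cycle_win_after; case: ifP => y_st cycle_nonpos.
  apply: le_trans (lerD IH (lexx _)) _.
  by rewrite stack_weight_push // gerDl.
by rewrite /push y_st stack_weight_rcons lerD2r.
Qed.

(* The partial sum is the stack weight plus the weights of the cycles cut so
   far; each of them has weight at least 1 and length at most [#|S|]. *)
Lemma stack_weight_le_wsum : cycle_win [:: s0] = false ->
  follows false (cycle_strat false) q ->
  forall n, #|S|%:Z * stack_weight (stack (hist q n)) + n.+1%:Z
              - (size (stack (hist q n)))%:Z <= #|S|%:Z * wsum q n.+1.
Proof.
move=> lose q_follows; elim=> [|n IH].
  by rewrite wsumS /wsum big_ord0 add0r /stack_weight big_seq1 /= addrK.
have [[_ st_uniq _] _] := cycle_run_invariant lose q_play q_follows n.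
rewrite wsumS stack_histS mulrDr /cycle_win_after.
set st := stack (hist q n) in IH st_uniq *; set y := q n.+1.
have st_small : (size st)%:Z <= #|S|%:Z by rewrite lez_nat size_uniq_le_card.
case: ifP => y_st cycle_pos; last first.
  by rewrite /push y_st stack_weight_rcons size_rcons mulrDr; lia.
have cycle_ge1 : 1 <= cycle_weight st y by rewrite -gtz0_ge1 ltNge cycle_pos.
have : #|S|%:Z <= #|S|%:Z * cycle_weight st y by rewrite ler_peMr.
have : #|S|%:Z * stack_weight st + #|S|%:Z * c y =
       #|S|%:Z * stack_weight (push st y) + #|S|%:Z * cycle_weight st y.
  by rewrite -!mulrDr stack_weight_push.
rewrite /push y_st size_takel ?index_mem //; lia.
Qed.

End CycleStrategies.

Definition bounds s r0 (r : int) :=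
  forall q, play_from s q -> follows true r0 q -> forall n, wsum q n <= r.

Lemma cycle_strat_bounded : cycle_win [:: s0] = true ->
  bounds s0 (cycle_strat true) weight_bound.
Proof.
move=> win q q_play q_follows [|n]; first by rewrite /wsum big_ord0 weight_bound_ge0.
apply: (le_trans (wsum_le_stack_weight q_play win q_follows n)).
apply: le_trans (ler_norm _) (stack_weight_bound _).
by have [[]] := cycle_run_invariant win q_play q_follows n.
Qed.

Lemma cycle_strat_growth q : cycle_win [:: s0] = false -> play_from s0 q ->
  follows false (cycle_strat false) q ->
  forall n, n%:Z <= #|S|%:Z * wsum q n + #|S|%:Z * (weight_bound + 1).
Proof.
move=> lose q_play q_follows [|n].
  by rewrite /wsum big_ord0 mulr0 add0r mulr_ge0 // addr_ge0 ?weight_bound_ge0.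
have [[_ st_uniq _] _ _] := cycle_run_invariant lose q_play q_follows n.
have st_small : (size (stack (hist q n)))%:Z <= #|S|%:Z.
  by rewrite lez_nat size_uniq_le_card.
have : #|S|%:Z * - weight_bound <= #|S|%:Z * stack_weight (stack (hist q n)).
  rewrite ler_wpM2l // lerNl (le_trans _ (stack_weight_bound st_uniq)) //.
  by rewrite -normrN ler_norm.
have := stack_weight_le_wsum q_play lose q_follows n; lia.
Qed.

Definition bounded_from s r := exists2 r0, legal true r0 & bounds s r0 r.

Definition boundable s := exists r : nat, bounded_from s r%:Z.

Definition least_bound s : nat :=
  if pselect (exists r, `[< bounded_from s r%:Z >]) is left ex then ex_minn ex
  else 0%N.

Lemma least_boundP s : boundable s ->
  bounded_from s (least_bound s) /\
  forall r : nat, bounded_from s r%:Z -> (least_bound s <= r)%N.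
Proof.
move=> [r r_bound]; rewrite /least_bound; case: pselect => [ex|no_ex]; last first.
  by exfalso; apply: no_ex; exists r; apply/asboolP.
by case: ex_minnP => m /asboolP m_bound m_min; split => // r' /asboolP; apply: m_min.
Qed.

(* From [y], play [r0] as if [s] had been visited first. *)
Lemma bounded_from_succ s r r0 y : legal true r0 -> bounds s r0 r -> e s y -> (own0 s -> y = r0 [:: s]) -> bounded_from y (r - c s).
Proof.
move=> r0_legal r0_bound edge own_y.
exists (fun h => r0 (s :: h)).
  by move=> h x own; rewrite -rcons_cons; apply: r0_legal.
move=> q' [q'0 q'_edge] q'_follows n.
pose q m := if m is m'.+1 then q' m' else s.
have q_play : play_from s q by split => // -[|m] /=; [rewrite q'0 | apply: q'_edge].
have q_follows : follows true r0 q.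
  move=> [|m] /= own; first by rewrite q'0 own_y.
  by rewrite (q'_follows m own) /hist [in RHS]mkseqSl.
have := r0_bound q q_play q_follows n.+1; rewrite /wsum big_ord_recl /=.
have -> : \sum_(i < n) c (q (lift ord0 i)) = wsum q' n.
  by apply: eq_bigr => i _; rewrite lift0.
by rewrite addrC -lerBrDr.
Qed.

Lemma least_bound_succ s r0 y : boundable s -> legal true r0 ->
  bounds s r0 (least_bound s) -> e s y -> (own0 s -> y = r0 [:: s]) ->
  boundable y /\ (least_bound y)%:Z + c s <= (least_bound s)%:Z.
Proof.
move=> s_boundable r0_legal r0_bound edge own_y.
have y_bounded := bounded_from_succ r0_legal r0_bound edge own_y.
have bound_ge0 : 0 <= (least_bound s)%:Z - c s.
  have [r1 r1_legal r1_bound] := y_bounded.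
  have [q [q_play q_follows]] := exists_play y r1_legal.
  by have := r1_bound q q_play q_follows 0%N; rewrite /wsum big_ord0.
have y_boundable : boundable y.
  by exists `|(least_bound s)%:Z - c s|%N; rewrite gez0_abs.
split => //; have [_ /(_ `|(least_bound s)%:Z - c s|%N)] := least_boundP y_boundable.
by rewrite gez0_abs // -lez_nat gez0_abs // lerBrDr; apply.
Qed.

Lemma least_bound_step s : boundable s ->
  (own0 s -> exists y,
     [/\ e s y, boundable y & (least_bound y)%:Z + c s <= (least_bound s)%:Z]) /\
  (~~ own0 s -> forall y, e s y ->
     boundable y /\ (least_bound y)%:Z + c s <= (least_bound s)%:Z).
Proof.
move=> s_boundable; have [[r0 r0_legal r0_bound] _] := least_boundP s_boundable.
split => [own | own y edge].
  have edge : e s (r0 [:: s]) by apply: (r0_legal [::]).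
  by exists (r0 [:: s]); have [] := least_bound_succ s_boundable r0_legal r0_bound edge.
by apply: (least_bound_succ s_boundable r0_legal r0_bound edge) => own'; rewrite own' in own.
Qed.

(* [least_bound] is a potential: following [bound_strat], the sum
   [wsum q n + least_bound (q n)] never increases. *)
Definition bound_strat x := odflt (some_succ x) [pick y | e x y && `[< boundable y >]
  && ((least_bound y)%:Z + c x <= (least_bound x)%:Z)].

Lemma bound_strat_edge x : e x (bound_strat x).
Proof.
by rewrite /bound_strat; case: pickP => [y /andP[/andP[]]|_] //; apply: some_succP.
Qed.

Lemma bound_strat_invariant s q : boundable s -> play_from s q ->
  follows true (positional bound_strat) q ->
  forall n, boundable (q n) /\ wsum q n + (least_bound (q n))%:Z <= (least_bound s)%:Z.
Proof.
move=> s_boundable [q0 q_edge] q_follows; elim=> [|n [qn_boundable IH]].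
  by rewrite q0 /wsum big_ord0 add0r.
have [own_step opp_step] := least_bound_step qn_boundable.
suff [qn1_boundable step] : boundable (q n.+1) /\
    (least_bound (q n.+1))%:Z + c (q n) <= (least_bound (q n))%:Z.
  by split => //; apply: le_trans IH; rewrite wsumS -addrA lerD2l addrC.
case: (boolP (own0 (q n))) => own; last exact: opp_step.
rewrite (q_follows n own) /positional last_hist /bound_strat.
case: pickP => [y /andP[/andP[_ /asboolP]]//|none].
have [y [edge y_boundable y_step]] := own_step own.
by move: (none y); rewrite edge y_step andbT /= => /negbT/asboolPn.
Qed.

Theorem cycle_win_bounded : cycle_win [:: s0] = true ->
  exists C, bounds s0 (positional bound_strat) C.
Proof.
move=> win.
have s0_boundable : boundable s0.
  exists `|weight_bound|%N; rewrite gez0_abs ?weight_bound_ge0 //.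
  by exists (cycle_strat true); [apply: cycle_strat_legal | apply: cycle_strat_bounded].
exists (least_bound s0)%:Z => q q_play q_follows n.
have [_] := bound_strat_invariant s0_boundable q_play q_follows n.
by apply: le_trans; rewrite lerDl.
Qed.

Theorem cycle_lose_growth sg : cycle_win [:: s0] = false -> legal true sg ->
  exists q, [/\ play_from s0 q, follows true sg q &
    forall n, n%:Z <= #|S|%:Z * wsum q n + #|S|%:Z * (weight_bound + 1)].
Proof.
move=> lose sg_legal; pose q := outcome s0 sg (cycle_strat false).
have q_play : play_from s0 q by apply: outcome_play => //; apply: cycle_strat_legal.
exists q; split => //; first exact: (@outcome_follows _ _ _ true).
exact: cycle_strat_growth q_play (@outcome_follows _ _ _ false).
Qed.

End BoundedSumGames.

Section LimsupAverages.
Local Open Scope ring_scope.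

Lemma limn_esup_le_add_div (u : nat -> R) (t K : R) :
  (forall n, (0 < n)%N -> u n <= t + K / n%:R) ->
  (limn_esup (fun n => (u n)%:E) <= t%:E)%E.
Proof.
move=> u_le; apply/lee_addgt0Pr => eps eps_gt0.
rewrite limn_esup_lim; apply: lime_le; first exact: is_cvg_esups.
near=> n.
have n_gt0 : (0 < n)%N by near: n; exact: nbhs_infty_ge.
have nK : K / eps <= n%:R by near: n; exact: nbhs_infty_ger.
apply/ereal_supP => _ [k /= nk <-]; rewrite -EFinD lee_fin.
apply: le_trans (u_le k (leq_trans n_gt0 nk)) _.
rewrite lerD2l ler_pdivrMr ?ltr0n ?(leq_trans n_gt0 nk) //.
rewrite ler_pdivrMr // in nK; apply: le_trans nK _.
by rewrite mulrC; apply: ler_wpM2l; [exact: ltW | rewrite ler_nat].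
Unshelve. all: by end_near.
Qed.

Lemma limn_esup_gt_add_div (u : nat -> R) (t a K : R) : 0 < a ->
  (forall n, (0 < n)%N -> t + a - K / n%:R <= u n) ->
  ~ (limn_esup (fun n => (u n)%:E) <= t%:E)%E.
Proof.
move=> a_gt0 u_ge esup_le.
have a2_gt0 : 0 < a / 2 by rewrite divr_gt0.
suff : ((t + a / 2)%:E <= limn_esup (fun n => (u n)%:E))%E.
  by move=> /le_trans /(_ esup_le); rewrite lee_fin gerDl leNgt a2_gt0.
rewrite limn_esup_lim; apply: lime_ge; first exact: is_cvg_esups.
near=> n.
have n_gt0 : (0 < n)%N by near: n; exact: nbhs_infty_ge.
have nK : K / (a / 2) <= n%:R by near: n; exact: nbhs_infty_ger.
apply: le_ereal_sup_tmp; exists (u n)%:E; first by exists n => //=; rewrite leqnn.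
rewrite lee_fin; apply: le_trans (u_ge n n_gt0).
rewrite ler_pdivrMr // in nK.
have : K / n%:R <= a / 2 by rewrite ler_pdivrMr ?ltr0n // mulrC.
lra.
Unshelve. all: by end_near.
Qed.

Lemma limn_esup_le_mul (u : nat -> R) (t K : R) :
  (forall n, (0 < n)%N -> n%:R * u n <= n%:R * t + K) ->
  (limn_esup (fun n => (u n)%:E) <= t%:E)%E.
Proof.
move=> u_le; apply: (@limn_esup_le_add_div u t K) => n n_gt0.
have n_pos : 0 < n%:R :> R by rewrite ltr0n.
rewrite -(ler_pM2l n_pos); apply: le_trans (u_le n n_gt0) _.
by rewrite mulrDr mulrCA mulfV ?mulr1 // gt_eqF.
Qed.

Lemma limn_esup_gt_mul (u : nat -> R) (t N K : R) : 0 < N ->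
  (forall n, (0 < n)%N -> n%:R * (N * t + 1) <= N * (n%:R * u n) + K) ->
  ~ (limn_esup (fun n => (u n)%:E) <= t%:E)%E.
Proof.
move=> N_gt0 u_ge; apply: (@limn_esup_gt_add_div u t (1 / N) (K / N)).
  by rewrite divr_gt0.
move=> n n_gt0.
have Nn_gt0 : 0 < N * n%:R by rewrite mulr_gt0 ?ltr0n.
rewrite -(ler_pM2l Nn_gt0).
have -> : N * n%:R * (t + 1 / N - K / N / n%:R) = n%:R * (N * t + 1) - K.
  by field; rewrite ?gt_eqF ?ltr0n.
by have := u_ge n n_gt0; rewrite -mulrA; lra.
Qed.

End LimsupAverages.

Section EnergyMemory.
Local Open Scope ring_scope.
Variables (A : arena) (w : avert A -> avert A -> rweight) (cap t : nat).
Local Notation V := (avert A).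
Local Notation M := ('I_(cap + 2)).

Lemma energy_subproof k : (minn k cap.+1 < cap + 2)%N.
Proof. by rewrite addn2 ltnS geq_minr. Qed.

Definition energy k : M := Ordinal (energy_subproof k).

Definition energy_step (m : M) (r : rweight) : M :=
  if (cap < m)%N then energy cap.+1 else
  match r with
  | Rch => energy cap
  | Wt k => if (k <= m)%N then energy (m - k) else energy cap.+1
  end.

Definition prod_edge : rel (V * M) :=
  fun x y => aedge A x.1 y.1 && (y.2 == energy_step x.2 (w x.1 y.1)).

Definition prod_own0 : pred (V * M) := fun x => aV0 A x.1.

(* On the energy levels this is EL_cap - t, whose averages must stay at most 0. *)
Definition prod_weight (x : V * M) : int :=
  if (x.2 <= cap)%N then (x.2 : nat)%:Z - t%:Z else 1.

Definition prod_init : V * M := (ainit A, energy cap).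

Lemma prod_edge_total x : exists y, prod_edge x y.
Proof.
have [v edge] := aedge_total x.1; exists (v, energy_step x.2 (w x.1 v)).
by rewrite /prod_edge edge eqxx.
Qed.

Fixpoint energy_of (p : nat -> V) n : M :=
  if n is n.+1 then energy_step (energy_of p n) (w (p n) (p n.+1)) else energy cap.

Definition lift (p : nat -> V) n : V * M := (p n, energy_of p n).

Section EnergyOfPlay.
Variable p : nat -> V.

Lemma last_recharge_le n : (last_recharge w p n <= n)%N.
Proof. by apply/bigmax_leqP => i _; rewrite -ltnS ltn_ord. Qed.

Lemma last_rechargeS n : last_recharge w p n.+1 =
  if is_R (w (p n) (p n.+1)) then n.+1 else last_recharge w p n.
Proof.
rewrite /last_recharge big_mkcond big_ord_recr /= -big_mkcond /=.
case: ifP => _; last by rewrite maxn0.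
by apply/maxn_idPr; rewrite ltnW // ltnS last_recharge_le.
Qed.

Lemma ELcap0 : ELcap w cap p 0 = cap%:Z.
Proof.
have : (last_recharge w p 0 <= 0)%N by apply: last_recharge_le.
by rewrite /ELcap leqn0 => /eqP ->; rewrite big_geq // subr0.
Qed.

Lemma ELcapS n : ELcap w cap p n.+1 =
  if is_R (w (p n) (p n.+1)) then cap%:Z
  else ELcap w cap p n - (wabs (w (p n) (p n.+1)))%:Z.
Proof.
rewrite /ELcap last_rechargeS; case: ifP => _; first by rewrite big_geq // subr0.
by rewrite big_nat_recr ?last_recharge_le //= PoszD opprD addrA.
Qed.

Lemma energy_of_spec n :
  ((energy_of p n <= cap)%N /\ (energy_of p n)%:Z = ELcap w cap p n) \/
  ((cap < energy_of p n)%N /\ exists2 m, (m <= n)%N & ELcap w cap p m < 0).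
Proof.
elim: n => [|n [[le_cap EL_n]|[gt_cap [m le_mn EL_m]]]].
- by left; rewrite ELcap0 /=; split; lia.
- rewrite /= /energy_step ltnNge le_cap /=; move: (ELcapS n).
  case: (w (p n) (p n.+1)) => [k|] /= EL_n1; last by left; rewrite EL_n1; split; lia.
  case: (leqP k (energy_of p n)) => k_le /=; first by left; rewrite EL_n1 -EL_n; split; lia.
  by right; split; [lia | exists n.+1 => //; rewrite EL_n1 -EL_n; lia].
- right; rewrite /= /energy_step gt_cap; split; first by rewrite /=; lia.
  by exists m => //; rewrite (leq_trans le_mn).
Qed.

Lemma energy_ofE n : (energy_of p n <= cap)%N -> (energy_of p n)%:Z = ELcap w cap p n.
Proof. by case: (energy_of_spec n) => [[]//|[]]; rewrite ltnNge => /negP. Qed.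

Lemma Recharge_energy_of_le : Recharge w cap p -> forall n, (energy_of p n <= cap)%N.
Proof.
move=> recharge n; case: (energy_of_spec n) => [[]//|[_ [m _ EL_m]]].
by move: (recharge m); rewrite leNgt EL_m.
Qed.

Lemma energy_of_sink n : (cap < energy_of p n)%N -> (cap < energy_of p n.+1)%N.
Proof. by move=> gt_cap; rewrite /= /energy_step gt_cap /=; lia. Qed.

Lemma upd_plus_energy_of n :
  upd_plus (energy cap) (fun m v v' => energy_step m (w v v')) (Defs.prefix p n)
  = energy_of p n.
Proof.
rewrite /Defs.prefix mkseqSl /=.
suff -> : foldl (fun (mu : M * V) v => (energy_step mu.1 (w mu.2 v), v))
    (energy cap, p 0%N) (mkseq (fun i => p i.+1) n) = (energy_of p n, p n) by [].
by elim: n => [//|n IH]; rewrite mkseqS foldl_rcons IH.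
Qed.

Lemma wsum_lift n : (forall i, (energy_of p i <= cap)%N) ->
  wsum prod_weight (lift p) n = \sum_(i < n) ELcap w cap p i - (n * t)%:Z.
Proof.
move=> le_cap; rewrite /wsum.
under eq_bigr => i _ do rewrite /prod_weight /= le_cap energy_ofE //.
rewrite sumrB sumr_const card_ord; congr (_ - _).
by rewrite -mulr_natr natz -PoszM mulnC.
Qed.

Lemma mulr_avg_EL n : (0 < n)%N ->
  n%:R * avg_EL w cap p n = (\sum_(i < n) ELcap w cap p i)%:~R.
Proof.
by move=> n_gt0; rewrite /avg_EL mulrA mulfV ?mul1r ?rmorph_sum // pnatr_eq0 -lt0n.
Qed.

(* Once in the sink, every step adds weight 1, so bounded sums never reach it. *)
Lemma bounded_wsum_no_sink (C : int) :
  (forall n, wsum prod_weight (lift p) n <= C) -> forall n, (energy_of p n <= cap)%N.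
Proof.
move=> bounded n; rewrite leqNgt; apply/negP => sink.
have sink_after m : (cap < energy_of p (n + m))%N.
  by elim: m => [|m IH]; rewrite ?addn0 // [(n + _)%N]addnS; apply: energy_of_sink.
have wsum_after m : wsum prod_weight (lift p) (n + m)
    = wsum prod_weight (lift p) n + m%:Z.
  elim: m => [|m IH]; first by rewrite addn0 addr0.
  by rewrite [(n + _)%N]addnS wsumS IH /prod_weight /= leqNgt sink_after /=; lia.
have := bounded (n + (absz (C - wsum prod_weight (lift p) n)).+1).
rewrite wsum_after; lia.
Qed.

End EnergyOfPlay.

Lemma lift_play p : is_play p -> play_from prod_edge prod_init (lift p).
Proof.
by case=> p0 p_edge; split; [rewrite /lift p0 | move=> n; rewrite /prod_edge p_edge eqxx].
Qed.

Lemma play_from_liftE q : play_from prod_edge prod_init q ->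
  q =1 lift (fun n => (q n).1).
Proof.
case=> q0 q_edge; elim=> [|n IH]; first by rewrite /lift q0.
have /andP[_ /eqP q2] := q_edge n.
by rewrite (surjective_pairing (q n.+1)) q2 IH.
Qed.

Lemma cycle_win_memory_strategy :
  cycle_win prod_edge prod_own0 prod_weight prod_init [:: prod_init] = true ->
  exists (mI : M) (Upd : M -> V -> V -> M) (Nxt : V -> M -> V),
    is_next_move Nxt /\ wins0_with (AvgRecharge w cap t) (induced_strategy mI Upd Nxt).
Proof.
move=> win; set f := bound_strat prod_edge prod_own0 prod_weight.
have [C C_bound] := cycle_win_bounded prod_edge_total win.
exists (energy cap), (fun m v v' => energy_step m (w v v')), (fun v m => (f (v, m)).1).
have f_next : is_next_move (fun v m => (f (v, m)).1).
  move=> v m _.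
  by have /andP[] := bound_strat_edge prod_own0 prod_weight prod_edge_total (v, m).
split => //; split=> [h v own | p p_play p_cons].
  by rewrite /induced_strategy last_rcons; apply: f_next.
have q_follows : follows prod_own0 true (positional prod_init f) (lift p).
  move=> n own; rewrite /positional last_hist.
  have := p_cons n own; rewrite /induced_strategy upd_plus_energy_of /Defs.prefix.
  rewrite mkseqS last_rcons /lift /= => ->.
  have /andP[_ /eqP <-] := bound_strat_edge prod_own0 prod_weight prod_edge_total (lift p n).
  by rewrite -surjective_pairing.
have bounded := C_bound (lift p) (lift_play p_play) q_follows.
have le_cap := bounded_wsum_no_sink bounded.
split; last by move=> n; rewrite -energy_ofE.
apply: (@limn_esup_le_mul _ _ C%:~R) => n n_gt0.
rewrite mulr_avg_EL // -natrM.
rewrite -[((n * t)%N)%:R]/(((n * t)%N%:Z)%:~R : R) -intrD ler_int.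
by have := bounded n; rewrite wsum_lift // PoszM; lia.
Qed.

Lemma cycle_lose_no_winning_strategy (sg : strategy A) :
  cycle_win prod_edge prod_own0 prod_weight prod_init [:: prod_init] = false ->
  ~ wins0_with (AvgRecharge w cap t) sg.
Proof.
move=> lose [sg_legal sg_wins].
pose sgM : strat (V * M)%type := fun h =>
  let x := last prod_init h in let v := sg (map fst h) in (v, energy_step x.2 (w x.1 v)).
have sgM_legal : legal prod_edge prod_own0 true sgM.
  move=> h x own; rewrite /sgM last_rcons map_rcons /prod_edge /= eqxx andbT.
  exact: sg_legal.
have [q [q_play q_follows growth]] := cycle_lose_growth prod_edge_total lose sgM_legal.
pose p n := (q n).1.
have p_play : is_play p.
  by case: q_play => q0 q_edge; split; [rewrite /p q0 | move=> n; case/andP: (q_edge n)].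
have p_cons : consistent0 sg p.
  move=> n own; rewrite /p (q_follows n own) /sgM /=; congr sg.
  by rewrite /hist /Defs.prefix /mkseq -map_comp.
have [avg recharge] := sg_wins p p_play p_cons.
have le_cap := Recharge_energy_of_le recharge.
pose N := #|{: (V * M)%type}|; pose K := N%:Z * (weight_bound prod_weight + 1).
have N_gt0 : (0 < N)%N by apply/card_gt0P; exists prod_init.
apply: (@limn_esup_gt_mul _ t%:R N%:R K%:~R _ _ avg); first by rewrite ltr0n.
move=> n n_gt0; rewrite mulr_avg_EL //.
have : n%:Z * (N%:Z * t%:Z + 1) <= N%:Z * (\sum_(i < n) ELcap w cap p i) + K.
  have : wsum prod_weight q n = \sum_(i < n) ELcap w cap p i - (n * t)%:Z.
    rewrite -wsum_lift //; apply: eq_bigr => i _.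
    exact: congr1 _ (play_from_liftE q_play i).
  have growth_n : n%:Z <= N%:Z * wsum prod_weight q n + K := growth n.
  by rewrite PoszM in growth_n *; nia.
by rewrite -(ler_int R) !(intrD, intrM).
Qed.

End EnergyMemory.

Theorem corollary1 (A : arena) (w : avert A -> avert A -> rweight) (cap t : nat) :
  wins0 (AvgRecharge w cap t) ->
  exists (mI : 'I_(cap + 2)) (Upd : 'I_(cap + 2) -> avert A -> avert A -> 'I_(cap + 2))
         (Nxt : avert A -> 'I_(cap + 2) -> avert A),
    is_next_move Nxt /\
    wins0_with (AvgRecharge w cap t) (induced_strategy mI Upd Nxt).
Proof.
move=> [sg sg_wins].
case win: (cycle_win (@prod_edge A w cap) (@prod_own0 A cap) (@prod_weight A cap t)
                     (@prod_init A cap) [:: @prod_init A cap]).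
  exact: cycle_win_memory_strategy.
by case: (cycle_lose_no_winning_strategy win sg_wins).
Qed.
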